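(* Let $P^1,\dots,P^4\in\mathbb{R}^n$ be in general position, let $Q^0$ be the equidistant point from $P^1,\dots,P^4$ with barycentric coordinate $\boldsymbol\lambda^0$, and suppose $\lambda^0_1<0$, $\lambda^0_2<0$, $\lambda^0_3\ge0$, $\lambda^0_4\ge0$. Let $Q^{1(1)}=\pi(Q^0|L(P^2,P^3,P^4))$ and $Q^{1(2)}=\pi(Q^0|L(P^1,P^3,P^4))$, with barycentric coordinates $\boldsymbol\lambda^{1(1)},\boldsymbol\lambda^{1(2)}$ about $P^1,\dots,P^4$, and suppose $\lambda^{1(2)}_1<0$. If moreover $\lambda^{1(1)}_2\ge0$, $\lambda^{1(1)}_3\ge0$, $\lambda^{1(1)}_4\ge0$, then the center of the smallest enclosing circle of $P^1,\dots,P^4$ is $Q^\ast=Q^{1(1)}$ and its radius is $d^\ast=d(P^2,Q^{1(1)})$.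
   Context: $d$ is the Euclidean distance. Points are in general position if $P^2-P^1,\dots,P^m-P^1$ are linearly independent. $L(S^1,\dots,S^r)$ is the affine subspace spanned by the points; $\pi(Q'|L)$ is the orthogonal projection onto the affine subspace $L$. The barycentric coordinate of $Q\in L(P^1,\dots,P^m)$ is the unique $\boldsymbol\lambda$ with $\sum_i\lambda_i=1$, $Q=\sum_i\lambda_iP^i$. The equidistant point is the unique $Q^0\in L(P^1,\dots,P^m)$ with all $d(P^i,Q^0)$ equal. The smallest enclosing circle has center $Q^\ast$ attaining $\min_Q\max_i d(P^i,Q)$ and radius $d^\ast$ equal to this minimum. *)

From HB Require Import structures.
From mathcomp Require Import all_boot all_order all_algebra.
From mathcomp Require Import reals.
Set Implicit Arguments. Unset Strict Implicit. Unset Printing Implicit Defensive.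
Import Order.TTheory GRing.Theory Num.Theory.
Local Open Scope ring_scope.

Section Geom.
Variable R : realType.
Variable n : nat.
Implicit Types u v Q : 'rV[R]_n.

Definition dotp u v : R := (u *m v^T) 0 0.
Definition dist u v : R := Num.sqrt (dotp (u - v) (u - v)).

Definition general_position (m : nat) (P : 'I_m.+1 -> 'rV[R]_n) : bool :=
  row_free (\matrix_(i < m) (P (lift ord0 i) - P ord0)).

Definition is_bary (k : nat) (S : 'I_k -> 'rV[R]_n) Q (lam : 'I_k -> R) : Prop :=
  \sum_(i < k) lam i = 1 /\ Q = \sum_(i < k) lam i *: S i.

Definition in_aff (k : nat) (S : 'I_k -> 'rV[R]_n) Q : Prop :=
  exists lam, is_bary S Q lam.

Definition is_proj (k : nat) (S : 'I_k -> 'rV[R]_n) Q X : Prop :=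
  in_aff S X /\ forall Y, in_aff S Y -> dotp (Q - X) (Y - X) = 0.

Definition is_equidistant (k : nat) (P : 'I_k -> 'rV[R]_n) Q0 : Prop :=
  in_aff P Q0 /\ forall i j, dist (P i) Q0 = dist (P j) Q0.

Definition maxdist (k : nat) (P : 'I_k -> 'rV[R]_n) Q : R :=
  \big[Num.max/0]_(i < k) dist (P i) Q.

Definition is_SEC_center (k : nat) (P : 'I_k -> 'rV[R]_n) Q : Prop :=
  forall Q', maxdist P Q <= maxdist P Q'.

End Geom.

(* 0-based names for the indices 1..4 *)
Definition i1 : 'I_4 := @Ordinal 4 0 isT.
Definition i2 : 'I_4 := @Ordinal 4 1 isT.
Definition i3 : 'I_4 := @Ordinal 4 2 isT.
Definition i4 : 'I_4 := @Ordinal 4 3 isT.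

From HB Require Import structures.
From mathcomp Require Import all_boot all_order all_algebra.
From mathcomp Require Import reals.
From mathcomp Require Import ring lra.
Import Order.TTheory GRing.Theory Num.Theory.
Local Open Scope ring_scope.
Set Implicit Arguments. Unset Strict Implicit.

(* Pythagoras in the affine span of P^2, P^3, P^4 shows that the projection
   Q^{1(1)} of the circumcenter Q^0 is equidistant from P^2, P^3, P^4; since
   lambda^0_1 < 0 the point P^1 lies on the far side of that span, hence within
   the same distance of Q^{1(1)}. As Q^{1(1)} is a convex combination of the
   points at maximal distance, averaging squared distances with its barycentric
   weights gives, for every Q, max_i d(P^i,Q)^2 >= max_i d(P^i,Q^{1(1)})^2
   + d(Q^{1(1)},Q)^2, so Q^{1(1)} is the unique center. *)

Section InnerProduct.
Variables (R : realType) (n : nat).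
Implicit Types u v w : 'rV[R]_n.

Lemma dotpE u v : dotp u v = \sum_k u 0 k * v 0 k.
Proof. by rewrite /dotp !mxE; apply: eq_bigr => k _; rewrite mxE. Qed.

Lemma dotpC u v : dotp u v = dotp v u.
Proof. by rewrite !dotpE; apply: eq_bigr => k _; rewrite mulrC. Qed.

Lemma dotpDl u v w : dotp (u + v) w = dotp u w + dotp v w.
Proof. by rewrite !dotpE -big_split; apply: eq_bigr => k _; rewrite !mxE mulrDl. Qed.

Lemma dotpZl a u w : dotp (a *: u) w = a * dotp u w.
Proof. by rewrite !dotpE mulr_sumr; apply: eq_bigr => k _; rewrite !mxE mulrA. Qed.

Lemma dotp0l w : dotp 0 w = 0.
Proof. by rewrite -(scale0r 0) dotpZl mul0r. Qed.

Lemma dotpDr u v w : dotp w (u + v) = dotp w u + dotp w v.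
Proof. by rewrite dotpC dotpDl !(dotpC w). Qed.

Lemma dotpZr a u w : dotp w (a *: u) = a * dotp w u.
Proof. by rewrite dotpC dotpZl dotpC. Qed.

Lemma dotp_suml (I : Type) (r : seq I) (P : pred I) (F : I -> 'rV[R]_n) w :
  dotp (\sum_(i <- r | P i) F i) w = \sum_(i <- r | P i) dotp (F i) w.
Proof. by elim/big_rec2: _ => [|i x y _ <-]; rewrite ?dotp0l ?dotpDl. Qed.

Lemma dotp_sumr (I : Type) (r : seq I) (P : pred I) (F : I -> 'rV[R]_n) w :
  dotp w (\sum_(i <- r | P i) F i) = \sum_(i <- r | P i) dotp w (F i).
Proof. by rewrite dotpC dotp_suml; apply: eq_bigr => i _; rewrite dotpC. Qed.

Lemma dotp_ge0 u : 0 <= dotp u u.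
Proof. by rewrite dotpE; apply: sumr_ge0 => k _; rewrite -expr2 sqr_ge0. Qed.

Lemma dotp_eq0 u : (dotp u u == 0) = (u == 0).
Proof.
apply/eqP/eqP => [|->]; last by rewrite dotp0l.
rewrite dotpE => /psumr_eq0P u0; apply/rowP => k; apply/eqP; rewrite mxE.
by rewrite -sqrf_eq0 expr2 u0 // => i _; rewrite -expr2 sqr_ge0.
Qed.

Lemma dotpDD u v : dotp (u + v) (u + v) = dotp u u + 2 * dotp u v + dotp v v.
Proof. by rewrite !dotpDl !dotpDr (dotpC v u); ring. Qed.

Lemma sqr_dist u v : dist u v ^+ 2 = dotp (u - v) (u - v).
Proof. by rewrite /dist sqr_sqrtr // dotp_ge0. Qed.

Lemma dist_ge0 u v : 0 <= dist u v.
Proof. exact: sqrtr_ge0. Qed.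

Lemma ler_dist u v u' v' :
  (dist u v <= dist u' v') = (dist u v ^+ 2 <= dist u' v' ^+ 2).
Proof. by rewrite ler_sqr ?nnegrE ?dist_ge0. Qed.

End InnerProduct.

Section Affine.
Variables (R : realType) (n k : nat) (S : 'I_k -> 'rV[R]_n).

Lemma in_aff_vertex i : in_aff S (S i).
Proof.
exists (fun j => (j == i)%:R); split.
  by rewrite (bigD1 i) //= eqxx big1 ?addr0 // => j /negbTE ->.
rewrite (bigD1 i) //= eqxx scale1r big1 ?addr0 // => j /negbTE ->.
by rewrite scale0r.
Qed.

Lemma bary_subr Q lam X :
  is_bary S Q lam -> Q - X = \sum_i lam i *: (S i - X).
Proof.
move=> [lam1 ->]; apply/esym; under eq_bigr do rewrite scalerBr.
by rewrite sumrB -scaler_suml lam1 scale1r.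
Qed.

(* Leibniz's identity for the moment of inertia about Y. *)
Lemma sum_sqr_dist_bary X m Y : is_bary S X m ->
  \sum_i m i * dist (S i) Y ^+ 2 =
  \sum_i m i * dist (S i) X ^+ 2 + dist X Y ^+ 2.
Proof.
move=> Xm; have [m1 _] := Xm.
have centroid : \sum_i m i *: (S i - X) = 0 by rewrite -(bary_subr X Xm) subrr.
have expand i : m i * dist (S i) Y ^+ 2 = m i * dist (S i) X ^+ 2
    + 2 * dotp (m i *: (S i - X)) (X - Y) + m i * dist X Y ^+ 2.
  rewrite !sqr_dist dotpZl (_ : S i - Y = (S i - X) + (X - Y)) ?dotpDD.
    by ring.
  by rewrite addrA subrK.
rewrite (eq_bigr _ (fun i _ => expand i)) !big_split /= -mulr_sumr -dotp_suml.
by rewrite centroid dotp0l -mulr_suml m1; ring.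
Qed.

End Affine.

Section GeneralPosition.
Variables (R : realType) (n m : nat) (S : 'I_m.+1 -> 'rV[R]_n).

Lemma general_position_bary_inj Q a b :
  general_position S -> is_bary S Q a -> is_bary S Q b -> a =1 b.
Proof.
move=> gp [a1 Qa] [b1 Qb].
pose c i := a i - b i.
have c0 : \sum_i c i = 0 by rewrite sumrB a1 b1 subrr.
have cS : \sum_i c i *: S i = 0.
  by under eq_bigr do rewrite scalerBl; rewrite sumrB -Qa -Qb subrr.
suff c_eq0 i : c i = 0 by move=> i; apply: subr0_eq; exact: c_eq0.
set A := \matrix_(i < m) (S (lift ord0 i) - S ord0).
have cA : \row_j c (lift ord0 j) *m A = 0 *m A.
  rewrite mul0mx mulmx_sum_row -[RHS]cS big_ord_recl.
  have -> : c ord0 = - \sum_j c (lift ord0 j).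
    by apply/eqP; rewrite -addr_eq0; rewrite big_ord_recl in c0; apply/eqP.
  rewrite scaleNr scaler_suml addrC -sumrB; apply: eq_bigr => j _.
  by rewrite rowK mxE scalerBr.
have c_lift j : c (lift ord0 j) = 0.
  by have := congr1 (fun v : 'rV[R]_m => v 0 j) (row_free_inj gp cA); rewrite !mxE.
case: (unliftP ord0 i) => [j ->|->]; first exact: c_lift.
by move: c0; rewrite big_ord_recl big1 ?addr0.
Qed.

Lemma is_bary_lift i0 Q mu : is_bary (fun j => S (lift i0 j)) Q mu ->
  is_bary S Q (fun i => oapp mu 0 (unlift i0 i)).
Proof.
move=> [mu1 Qmu]; split.
  by rewrite (bigD1_ord i0) //= unlift_none add0r; under eq_bigr do rewrite liftK.
rewrite (bigD1_ord i0) //= unlift_none scale0r add0r Qmu.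
by apply: eq_bigr => j _; rewrite liftK.
Qed.

End GeneralPosition.

Section Projection.
Variables (R : realType) (n : nat).
Implicit Types Q X Y : 'rV[R]_n.

Lemma sqr_dist_proj Q X Y :
  dist Y X ^+ 2 = dist Y Q ^+ 2 - dist Q X ^+ 2 + 2 * dotp (Q - X) (Y - X).
Proof.
rewrite !sqr_dist (_ : Y - Q = (Y - X) + - (Q - X)); last by rewrite opprB addrA subrK.
move: (Y - X) (Q - X) => a b.
by rewrite dotpDD -scaleN1r !dotpZl !dotpZr (dotpC b a); ring.
Qed.

Variables (m : nat) (S : 'I_m.+1 -> 'rV[R]_n) (i0 : 'I_m.+1) (Q X : 'rV[R]_n).
Hypothesis orthX : forall j, dotp (Q - X) (S (lift i0 j) - X) = 0.
Hypothesis equidQ : forall i j, dist (S i) Q = dist (S j) Q.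

(* [Q - X] is a combination of the [S i - X] orthogonal to all but one of them,
   so its squared norm has the sign of that one coefficient. *)
Lemma proj_vertex_obtuse lam : is_bary S Q lam -> lam i0 < 0 ->
  dotp (Q - X) (S i0 - X) <= 0.
Proof.
move=> Qlam lam0_lt0; rewrite -(nmulr_rge0 _ lam0_lt0).
have := dotp_ge0 (Q - X); rewrite {2}(bary_subr X Qlam) dotp_sumr.
rewrite (bigD1_ord i0) //= big1 ?addr0 => [|j _]; first by rewrite dotpZr.
by rewrite dotpZr orthX mulr0.
Qed.

Lemma proj_dist_lift j j' : dist (S (lift i0 j)) X = dist (S (lift i0 j')) X.
Proof.
rewrite /dist -!sqr_dist (sqr_dist_proj Q X (S (lift i0 j))).
by rewrite (sqr_dist_proj Q X (S (lift i0 j'))) !orthX (equidQ (lift i0 j) (lift i0 j')).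
Qed.

Lemma proj_dist_le lam i j : is_bary S Q lam -> lam i0 < 0 ->
  dist (S i) X <= dist (S (lift i0 j)) X.
Proof.
move=> Qlam lam0_lt0; case: (unliftP i0 i) => [j' ->|->].
  by rewrite (proj_dist_lift j' j).
rewrite ler_dist (sqr_dist_proj Q X (S i0)) (sqr_dist_proj Q X (S (lift i0 j))).
rewrite orthX (equidQ i0 (lift i0 j)).
by rewrite lerD2l ler_pM2l ?ltr0n // (proj_vertex_obtuse Qlam).
Qed.

End Projection.

Section SmallestEnclosingCircle.
Variables (R : realType) (n k : nat) (P : 'I_k -> 'rV[R]_n).
Implicit Types Q X Y : 'rV[R]_n.

Lemma le_maxdist i Q : dist (P i) Q <= maxdist P Q.
Proof. exact: le_bigmax. Qed.

Lemma maxdist_ge0 Q : 0 <= maxdist P Q.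
Proof. exact: bigmax_ge_id. Qed.

Lemma maxdist_attained j Q : (forall i, dist (P i) Q <= dist (P j) Q) ->
  maxdist P Q = dist (P j) Q.
Proof.
move=> le_j; apply/le_anti; rewrite le_maxdist andbT.
exact: bigmax_le (dist_ge0 _ _) (fun i _ => le_j i).
Qed.

Section BaryCenter.
Variables (X : 'rV[R]_n) (m : 'I_k -> R).
Hypotheses (Xm : is_bary P X m) (m_ge0 : forall i, 0 <= m i).
Hypothesis m_support : forall i, m i != 0 -> dist (P i) X = maxdist P X.

(* Average the squared distances to Y with the weights [m]. *)
Lemma sqr_maxdist_bary Y :
  maxdist P X ^+ 2 + dist X Y ^+ 2 <= maxdist P Y ^+ 2.
Proof.
have [m1 _] := Xm.
have -> : maxdist P X ^+ 2 = \sum_i m i * dist (P i) X ^+ 2.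
  rewrite -[LHS]mul1r -m1 mulr_suml; apply: eq_bigr => i _.
  by have [->|/m_support ->] := eqVneq (m i) 0; rewrite ?mul0r.
rewrite -(sum_sqr_dist_bary Y Xm) -[X in _ <= X]mul1r -m1 mulr_suml.
apply: ler_sum => i _; apply: ler_wpM2l => //.
by rewrite ler_sqr ?nnegrE ?dist_ge0 ?maxdist_ge0 ?le_maxdist.
Qed.

Lemma SEC_center_bary :
  is_SEC_center P X /\ forall Q, is_SEC_center P Q -> Q = X.
Proof.
have le_sqr Y : maxdist P X ^+ 2 <= maxdist P Y ^+ 2.
  by apply: le_trans (sqr_maxdist_bary Y); rewrite lerDl sqr_ge0.
split=> [Y | Q Q_SEC].
  by rewrite -ler_sqr ?nnegrE ?maxdist_ge0 ?le_sqr.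
have : dist X Q ^+ 2 <= 0.
  have := Q_SEC X; rewrite -ler_sqr ?nnegrE ?maxdist_ge0 //.
  have := sqr_maxdist_bary Q; lra.
rewrite sqr_dist => le0.
by apply/esym/eqP; rewrite -subr_eq0 -dotp_eq0 eq_le le0 dotp_ge0.
Qed.

End BaryCenter.

End SmallestEnclosingCircle.

Theorem theorem9 (R : realType) (n : nat) (P : 'I_4 -> 'rV[R]_n)
  (Q0 Q11 Q12 : 'rV[R]_n) (lam0 lam11 lam12 : 'I_4 -> R) :
  general_position P ->
  is_equidistant P Q0 -> is_bary P Q0 lam0 ->
  lam0 i1 < 0 -> lam0 i2 < 0 -> 0 <= lam0 i3 -> 0 <= lam0 i4 ->
  is_proj (fun j : 'I_3 => P (lift i1 j)) Q0 Q11 -> is_bary P Q11 lam11 ->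
  is_proj (fun j : 'I_3 => P (lift i2 j)) Q0 Q12 -> is_bary P Q12 lam12 ->
  lam12 i1 < 0 ->
  0 <= lam11 i2 -> 0 <= lam11 i3 -> 0 <= lam11 i4 ->
  is_SEC_center P Q11 /\ (forall Q, is_SEC_center P Q -> Q = Q11) /\
  maxdist P Q11 = dist (P i2) Q11.
Proof.
(* Only the signs of [lam0 i1] and of [lam11] matter. *)
move=> gp [_ equid] Q0lam lam0_1 _ _ _ [[mu Q11mu] orth] Q11lam _ _ _
  lam11_2 lam11_3 lam11_4.
have orth_lift j : dotp (Q0 - Q11) (P (lift i1 j) - Q11) = 0.
  exact: orth (in_aff_vertex _ j).
have lam11_1 : lam11 i1 = 0.
  have lam11E := general_position_bary_inj gp Q11lam (is_bary_lift Q11mu).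
  by rewrite lam11E /= unlift_none.
have lam11_ge0 i : 0 <= lam11 i.
  case: i => -[|[|[|[|//]]]] lti.
  - by rewrite (_ : Ordinal lti = i1) ?lam11_1 //; apply: val_inj.
  - by rewrite (_ : Ordinal lti = i2) //; apply: val_inj.
  - by rewrite (_ : Ordinal lti = i3) //; apply: val_inj.
  - by rewrite (_ : Ordinal lti = i4) //; apply: val_inj.
have i2E : i2 = lift i1 ord0 by apply: val_inj.
have maxQ11 : maxdist P Q11 = dist (P i2) Q11.
  apply: maxdist_attained => i.
  by rewrite i2E (proj_dist_le orth_lift equid _ _ Q0lam lam0_1).
have support i : lam11 i != 0 -> dist (P i) Q11 = maxdist P Q11.
  case: (unliftP i1 i) => [j ->|->]; last by rewrite lam11_1 eqxx.
  by rewrite maxQ11 i2E (proj_dist_lift orth_lift equid j ord0).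
have [SEC SEC_uniq] := SEC_center_bary Q11lam lam11_ge0 support.
by split; [|split].
Qed.
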